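(* Let $n\ge1$. (i) For every ordered normed space $E$ and every $\mathbf{x}\in E^{\otimes n}$, $\|\mathbf{x}\|_{\pi,E}\le\|\mathbf{x}\|_{\pi+,E}\le c_+(E)^n\|\mathbf{x}\|_{\pi,E}$. (ii) There exists a constant $\gamma(n)$, not depending on $E$, such that for every ordered normed space $E$ and every $\mathbf{x}\in E^{\vee n}$, $\|\mathbf{x}\|_{\pi s,E}\le\|\mathbf{x}\|_{\pi s+,E}\le\gamma(n)\,\|\mathbf{x}\|_{\pi s,E^+}\le\gamma(n)\,c_+(E)^n\,\|\mathbf{x}\|_{\pi s,E}$.
   Context: All vector spaces are real. An ordered normed space is a real normed space $E$ together with a closed convex cone $E_+\subseteq E$ (its elements are called positive, written $x\ge0$) such that $E=E_+-E_+$ and such that, writing $\|x\|_+:=\inf\{\|y\|+\|z\|: x=y-z,\ y,z\in E_+\}$, the constant $c_+(E):=\sup\{\|x\|_+:\|x\|\le1\}$ is finite. $E^+$ denotes $E$ equipped with the norm $\|\cdot\|_+$. $E^{\otimes n}$ is the algebraic $n$-th tensor power, $E^{\vee n}\subseteq E^{\otimes n}$ is the subspace of symmetric tensors (tensors invariant under every permutation of the $n$ tensor factors), and $x^{\otimes n}:=x\otimes\cdots\otimes x$. For a normed space $F$: $\|\mathbf{x}\|_{\pi,F}:=\inf\{\sum_k|a_k|\,\|x_{1k}\|\cdots\|x_{nk}\| : \mathbf{x}=\sum_k a_k x_{1k}\otimes\cdots\otimes x_{nk}\}$ on $F^{\otimes n}$, and $\|\mathbf{x}\|_{\pi s,F}:=\inf\{\sum_k|a_k|\,\|x_k\|^n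 : \mathbf{x}=\sum_k a_k x_k^{\otimes n},\ x_k\in F\}$ on $F^{\vee n}$ (finite sums, $a_k\in\mathbb{R}$). For an ordered normed space $E$: $\|\mathbf{x}\|_{\pi+,E}$ is defined like $\|\mathbf{x}\|_{\pi,E}$ but with all $x_{ik}\in E_+$, and $\|\mathbf{x}\|_{\pi s+,E}$ is defined like $\|\mathbf{x}\|_{\pi s,E}$ but with all $x_k\in E_+$ (infimum of the empty set being $+\infty$). *)

From HB Require Import structures.
From mathcomp Require Import all_boot all_order all_algebra perm.
From mathcomp Require Import all_classical all_reals ereal topology normedtype.
Set Implicit Arguments. Unset Strict Implicit. Unset Printing Implicit Defensive.
Import Order.TTheory GRing.Theory Num.Theory.
Import numFieldNormedType.Exports.
Local Open Scope classical_set_scope.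
Local Open Scope ring_scope.

Section Defs.
Variables (R : realType) (E : normedModType R).

Definition convex_cone (Ep : set E) : Prop :=
  Ep 0 /\ (forall x y, Ep x -> Ep y -> Ep (x + y)) /\
  (forall (a : R) x, 0 <= a -> Ep x -> Ep (a *: x)).

Definition generating (Ep : set E) : Prop :=
  forall x : E, exists y z, Ep y /\ Ep z /\ x = y - z.

Definition plus_norm (Ep : set E) (x : E) : R :=
  inf [set r | exists y z, [/\ Ep y, Ep z, x = y - z & r = `|y| + `|z|]].

Definition cplus (Ep : set E) : \bar R :=
  ereal_sup [set (plus_norm Ep x)%:E | x in [set x : E | `|x| <= 1]].

Definition ordered_normed_space (Ep : set E) : Prop :=
  [/\ closed Ep, convex_cone Ep, generating Ep & (cplus Ep < +oo)%E].

(** Algebraic tensor power E^{(x) n}: a tensor is represented by a finite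
    formal sum  sum_k a_k x_{1k} (x) ... (x) x_{nk}, encoded as a list of
    pairs (a_k, (i |-> x_{ik})).  Two formal sums represent the same tensor
    iff every n-multilinear form takes the same value on them (universal
    property of the algebraic tensor product). *)
Definition setc n (v : 'I_n -> E) (i : 'I_n) (w : E) : 'I_n -> E :=
  fun j => if j == i then w else v j.

Definition multilinear n (phi : ('I_n -> E) -> R) : Prop :=
  forall (i : 'I_n) (v : 'I_n -> E) (a : R) (y z : E),
    phi (setc v i (a *: y + z)) = a * phi (setc v i y) + phi (setc v i z).

Definition tensor_eval n (phi : ('I_n -> E) -> R) (s : seq (R * ('I_n -> E))) : R :=
  \sum_(t <- s) t.1 * phi t.2.

Definition tensor_eq n (s t : seq (R * ('I_n -> E))) : Prop :=
  forall phi, multilinear phi -> tensor_eval phi s = tensor_eval phi t.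

Definition tensor_perm n (sigma : 'S_n) (s : seq (R * ('I_n -> E))) :=
  [seq (t.1, fun i => t.2 (sigma i)) | t <- s].

Definition symmetric_tensor n (s : seq (R * ('I_n -> E))) : Prop :=
  forall sigma : 'S_n, tensor_eq (tensor_perm sigma s) s.

(** projective norm w.r.t. a norm-like function nrm, with all factors in P
    (P = setT : ||.||_pi ; P = E_+ : ||.||_{pi+}); inf over empty = +oo *)
Definition proj_norm n (nrm : E -> R) (P : set E) (s : seq (R * ('I_n -> E))) : \bar R :=
  ereal_inf [set (\sum_(t <- s') `|t.1| * \prod_(i < n) nrm (t.2 i))%:E
            | s' in [set s' | tensor_eq s' s /\
                              (forall t, t \in s' -> forall i, P (t.2 i))]].

Definition diag_tensor n (s : seq (R * E)) : seq (R * ('I_n -> E)) :=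
  [seq (t.1, fun _ : 'I_n => t.2) | t <- s].

Definition sym_proj_norm n (nrm : E -> R) (P : set E) (s : seq (R * ('I_n -> E))) : \bar R :=
  ereal_inf [set (\sum_(t <- s') `|t.1| * nrm t.2 ^+ n)%:E
            | s' in [set s' | tensor_eq (diag_tensor n s') s /\
                              (forall t, t \in s' -> P t.2)]].

End Defs.

(* (i) Split every factor as x = y - z with y, z in E_+ and
   ||y|| + ||z|| <= (c_+(E) + e) ||x||, and expand each elementary tensor
   multilinearly into 2^n elementary tensors with positive factors; let e -> 0.
   (ii) Choose weights w_0, ..., w_n with sum_m w_m m^k = (-1)^k for k <= n
   (a Vandermonde system).  Comparing coefficients of t in (y + t z)^(x)n gives
   (y - z)^(x)n = sum_m w_m (y + m z)^(x)n.  For a near-optimal splitting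
   x = y - z in E_+, every y + m z is positive of norm at most
   (n + 1) (1 + e) ||x||_+, so gamma(n) = (n + 1)^n sum_m |w_m| works.
   The last inequality is ||.||_+ <= c_+(E) ||.||. *)
From HB Require Import structures.
From mathcomp Require Import all_boot all_order all_algebra perm.
From mathcomp Require Import all_classical all_reals ereal topology normedtype.
From mathcomp Require Import ring lra.
Set Implicit Arguments. Unset Strict Implicit. Unset Printing Implicit Defensive.
Import Order.TTheory GRing.Theory Num.Theory.
Import numFieldNormedType.Exports.
Local Open Scope classical_set_scope.
Local Open Scope ring_scope.

Lemma cvg_expr_addr (R : realType) (c : R) n :
  (fun e => (c + e) ^+ n) @ (0 : R)^'+ --> c ^+ n.
Proof.
elim: n => [|n IH]; first by under eq_fun do rewrite expr0; exact: cvg_cst.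
under eq_fun do rewrite exprS; rewrite exprS; apply: cvgM => //.
rewrite -[X in _ --> X]addr0; apply: cvgD; first exact: cvg_cst.
exact: cvg_at_right_filter cvg_id.
Qed.

Lemma lee_expr_addgt0 (R : realType) (A : \bar R) (c V : R) n :
  (forall e, 0 < e -> (A <= ((c + e) ^+ n * V)%:E)%E) -> (A <= (c ^+ n * V)%:E)%E.
Proof.
move=> hA; apply/lee_addgt0Pr => d d0.
have cvgV : (fun e => (c + e) ^+ n * V) @ (0 : R)^'+ --> c ^+ n * V.
  by apply: cvgM; [exact: cvg_expr_addr | exact: cvg_cst].
suff /filter_ex[e [e0 hd]] : \forall e \near (0 : R)^'+,
    0 < e /\ `|c ^+ n * V - (c + e) ^+ n * V| < d.
  apply: (le_trans (hA e e0)); rewrite -EFinD lee_fin.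
  by move: hd; rewrite ltr_norml; lra.
near=> e; split; first by near: e; exact: nbhs_right_gt.
by near: e; exact: cvgr_dist_lt.
Unshelve. all: by end_near.
Qed.

Lemma lee_ereal_inf_pZl (R : realType) (T : Type) (S : set T) (f : T -> R)
    (A : \bar R) (K : R) :
  0 < K -> (forall s, S s -> (A <= (K * f s)%:E)%E) ->
  (A <= K%:E * ereal_inf [set (f s)%:E | s in S])%E.
Proof.
move=> K0 hA; rewrite -ereal_inf_pZl //.
apply: le_ereal_inf_tmp => _ [_ [s Ss <-] <-].
by rewrite -EFinM; exact: hA.
Qed.

Lemma interpolation_weights (F : numFieldType) n (b : nat -> F) :
  exists w : 'I_n.+1 -> F,
    forall k, (k <= n)%N -> \sum_(m < n.+1) w m * m%:R ^+ k = b k.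
Proof.
pose V := Vandermonde n.+1 (\row_(j < n.+1) (j%:R : F)).
pose rhs : 'cV[F]_n.+1 := \col_k b k.
have V_unit : V \in unitmx.
  rewrite unitmxE det_Vandermonde unitfE; apply/prodf_neq0 => i _.
  apply/prodf_neq0 => j ij; rewrite !mxE subr_eq0 eqr_nat.
  by rewrite eq_sym neq_ltn ij.
exists (fun m => (invmx V *m rhs) m 0) => k kn.
have := congr1 (fun M : 'cV_n.+1 => M (Ordinal (kn : (k < n.+1)%N)) 0)
  (mulKVmx V_unit rhs).
by rewrite /= !mxE => <-; apply: eq_bigr => m _; rewrite !mxE mulrC.
Qed.

Section OrderedNormedSpace.
Variables (R : realType) (E : normedModType R) (Ep : set E).
Hypotheses (Ep_cone : convex_cone Ep) (Ep_gen : generating Ep).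
Hypothesis cplus_fin : (cplus Ep < +oo)%E.

Lemma cone0 : Ep 0. Proof. by case: Ep_cone. Qed.

Lemma coneD y z : Ep y -> Ep z -> Ep (y + z).
Proof. by case: Ep_cone => _ [+ _]; apply. Qed.

Lemma coneZ (a : R) y : 0 <= a -> Ep y -> Ep (a *: y).
Proof. by case: Ep_cone => _ [_]; apply. Qed.

Let split_costs x :=
  [set r : R | exists y z, [/\ Ep y, Ep z, x = y - z & r = `|y| + `|z|]].

Let split_costs_neq0 x : split_costs x !=set0.
Proof.
by have [y [z [Py [Pz xE]]]] := Ep_gen x; exists (`|y| + `|z|), y, z.
Qed.

Let split_costs_lb x : lbound (split_costs x) `|x|.
Proof. by move=> _ [y [z [_ _ -> ->]]]; apply: ler_normB. Qed.

Lemma norm_le_plus_norm x : `|x| <= plus_norm Ep x.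
Proof. exact: lb_le_inf (split_costs_neq0 x) (@split_costs_lb x). Qed.

Lemma plus_norm_ge0 x : 0 <= plus_norm Ep x.
Proof. exact: le_trans (norm_le_plus_norm x). Qed.

Lemma plus_norm_le x y z : Ep y -> Ep z -> x = y - z ->
  plus_norm Ep x <= `|y| + `|z|.
Proof.
by move=> Py Pz xE; apply: (ge_inf (ex_intro _ _ (@split_costs_lb x))); exists y, z.
Qed.

Lemma plus_norm_lt x r : plus_norm Ep x < r ->
  exists y z, [/\ Ep y, Ep z, x = y - z & `|y| + `|z| < r].
Proof.
by move=> /(inf_lt (split_costs_neq0 x))[_ [y [z [Py Pz xE ->]]]]; exists y, z.
Qed.

Lemma splitting_le_plus_norm x e : 0 < e ->
  exists y z, [/\ Ep y, Ep z, x = y - z & `|y| + `|z| <= (1 + e) * plus_norm Ep x].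
Proof.
move=> e0; have [p0|p_gt0] := eqVneq (plus_norm Ep x) 0.
  have x0 : x = 0 by apply/eqP; rewrite -normr_le0 -p0 norm_le_plus_norm.
  by exists 0, 0; rewrite p0 x0 subr0 normr0 addr0 mulr0; split => //; exact: cone0.
have lt_p : plus_norm Ep x < (1 + e) * plus_norm Ep x.
  by rewrite mulrDl mul1r ltrDl mulr_gt0 // lt_def p_gt0 plus_norm_ge0.
have [y [z [Py Pz xE lt]]] := plus_norm_lt lt_p.
by exists y, z; split => //; exact: ltW.
Qed.

Local Notation c := (fine (cplus Ep)).

Lemma cplusE : cplus Ep = c%:E.
Proof.
have h : ((plus_norm Ep 0)%:E <= cplus Ep)%E.
  by apply: ereal_sup_ubound; exists 0 => //=; rewrite normr0 ler01.
rewrite fineK // fin_numE (lt_eqF cplus_fin) andbT.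
by apply/negP => /eqP cNy; rewrite cNy leeNy_eq in h.
Qed.

Lemma plus_norm_le_cplus x : `|x| <= 1 -> plus_norm Ep x <= c.
Proof. by move=> x1; rewrite -lee_fin -cplusE; apply: ereal_sup_ubound; exists x. Qed.

Lemma cplus_ge0 : 0 <= c.
Proof.
have n01 : `|0 : E| <= 1 by rewrite normr0.
exact: le_trans (plus_norm_ge0 0) (plus_norm_le_cplus n01).
Qed.

Lemma splitting_le_cplus x e : 0 < e ->
  exists y z, [/\ Ep y, Ep z, x = y - z & `|y| + `|z| <= (c + e) * `|x|].
Proof.
move=> e0; have [->|x0] := eqVneq x 0.
  by exists 0, 0; rewrite subr0 normr0 addr0 mulr0; split => //; exact: cone0.
have nx0 : 0 < `|x| by rewrite normr_gt0.
pose u := `|x|^-1 *: x.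
have u1 : `|u| <= 1 by rewrite normrZ ger0_norm ?invr_ge0 // mulVf ?gt_eqF.
have [y [z [Py Pz uE lt]]] : exists y z,
    [/\ Ep y, Ep z, u = y - z & `|y| + `|z| < c + e].
  by apply: plus_norm_lt; apply: le_lt_trans (plus_norm_le_cplus u1) _; rewrite ltrDl.
exists (`|x| *: y), (`|x| *: z); split; [exact: coneZ|exact: coneZ| |].
  by rewrite -scalerBr -uE scalerA mulfV ?gt_eqF // scale1r.
rewrite !normrZ normr_id -mulrDr mulrC.
by apply: ler_wpM2r; exact: ltW.
Qed.

Lemma plus_norm_le_cplus_norm x : plus_norm Ep x <= c * `|x|.
Proof.
rewrite -lee_fin -[c]expr1; apply: lee_expr_addgt0 => e e0.
have [y [z [Py Pz xE le]]] := splitting_le_cplus x e0.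
by rewrite lee_fin expr1; exact: le_trans (plus_norm_le Py Pz xE) le.
Qed.

Lemma cplus_eq0_trivial : c = 0 -> forall x : E, x = 0.
Proof.
move=> c0 x; apply/eqP; rewrite -normr_le0.
apply: le_trans (norm_le_plus_norm x) _.
by rewrite -(mul0r `|x|) -c0 plus_norm_le_cplus_norm.
Qed.

Definition cone_splitting (bound : E -> R) (pos neg : E -> E) : Prop :=
  forall x, [/\ Ep (pos x), Ep (neg x), x = pos x - neg x
              & `|pos x| + `|neg x| <= bound x].

Lemma exists_cone_splitting (bound : E -> R) :
  (forall x, exists y z, [/\ Ep y, Ep z, x = y - z & `|y| + `|z| <= bound x]) ->
  exists pos neg, cone_splitting bound pos neg.
Proof.
move=> hsplit.
have /choice[f hf] : forall x, exists p : E * E,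
    [/\ Ep p.1, Ep p.2, x = p.1 - p.2 & `|p.1| + `|p.2| <= bound x].
  by move=> x; have [y [z hyz]] := hsplit x; exists (y, z).
by exists (fst \o f), (snd \o f).
Qed.

End OrderedNormedSpace.

Section Tensors.
Variables (R : realType) (E : normedModType R) (n : nat).
Implicit Types (s : seq (R * ('I_n -> E))) (phi : ('I_n -> E) -> R).

Lemma multilinear_setc0 phi v i : multilinear phi -> phi (setc v i 0) = 0.
Proof. by move=> ml; have := ml i v 1 0 0; rewrite scale1r addr0 mul1r; lra. Qed.

Lemma tensor_eq_trans s1 s2 s3 :
  tensor_eq s1 s2 -> tensor_eq s2 s3 -> tensor_eq s1 s3.
Proof. by move=> e12 e23 phi ml; rewrite e12 // e23. Qed.

Lemma tensor_eq_flatten (T : Type) (rep : T -> seq (R * ('I_n -> E)))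
    (f : T -> R * ('I_n -> E)) (s : seq T) :
  (forall t phi, multilinear phi -> tensor_eval phi (rep t) = (f t).1 * phi (f t).2) ->
  tensor_eq (flatten (map rep s)) (map f s).
Proof.
move=> hrep phi ml; rewrite /tensor_eval big_flatten !big_map.
by apply: eq_bigr => t _; exact: hrep.
Qed.

Lemma tensor_eq_nil_trivial s : (0 < n)%N -> (forall v : E, v = 0) ->
  tensor_eq [::] s.
Proof.
move=> n_gt0 E0 phi ml; rewrite /tensor_eval big_nil big1 // => t _.
have -> : t.2 = setc t.2 (Ordinal n_gt0) 0.
  by apply: funext => j; rewrite /setc !(E0 (t.2 j)) if_same.
by rewrite multilinear_setc0 // mulr0.
Qed.

Definition proj_cost (nrm : E -> R) s : R :=
  \sum_(t <- s) `|t.1| * \prod_(i < n) nrm (t.2 i).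

Definition sym_cost (nrm : E -> R) (s : seq (R * E)) : R :=
  \sum_(t <- s) `|t.1| * nrm t.2 ^+ n.

Lemma proj_norm_le_cost (nrm : E -> R) (P : set E) s x :
  tensor_eq s x -> (forall t, t \in s -> forall i, P (t.2 i)) ->
  (proj_norm nrm P x <= (proj_cost nrm s)%:E)%E.
Proof. by move=> sx sP; apply: ereal_inf_lbound; exists s. Qed.

Lemma sym_proj_norm_le_cost (nrm : E -> R) (P : set E) (s : seq (R * E)) x :
  tensor_eq (diag_tensor n s) x -> (forall t, t \in s -> P t.2) ->
  (sym_proj_norm nrm P x <= (sym_cost nrm s)%:E)%E.
Proof. by move=> sx sP; apply: ereal_inf_lbound; exists s. Qed.

Lemma le_proj_norm (nrm : E -> R) (P Q : set E) (x : seq (R * ('I_n -> E))) :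
  P `<=` Q ->
  (proj_norm nrm Q x <= proj_norm nrm P x)%E.
Proof.
move=> PQ; apply: ereal_inf_le_tmp; apply: image_subset => s [sx sP].
by split => // t ts i; apply: PQ; exact: sP.
Qed.

Lemma le_sym_proj_norm (nrm : E -> R) (P Q : set E) (x : seq (R * ('I_n -> E))) :
  P `<=` Q ->
  (sym_proj_norm nrm Q x <= sym_proj_norm nrm P x)%E.
Proof.
move=> PQ; apply: ereal_inf_le_tmp; apply: image_subset => s [sx sP].
by split => // t ts; apply: PQ; exact: sP.
Qed.

End Tensors.

Section MultilinearExpansion.
Variables (R : realType) (E : normedModType R) (n : nat) (A B : 'I_n -> E).

(* The 2^(size l) terms of the expansion of phi (A + t B) along the coordinates
   in l (the other coordinates are taken from v), each tagged with its number
   of factors from B. *)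
Fixpoint expand_at (l : seq 'I_n) (v : 'I_n -> E) : seq (nat * ('I_n -> E)) :=
  if l is i :: l' then
    expand_at l' (setc v i (A i)) ++
    [seq (p.1.+1, p.2) | p <- expand_at l' (setc v i (B i))]
  else [:: (0%N, v)].

Lemma expand_at_eval (phi : ('I_n -> E) -> R) t l v :
  multilinear phi -> uniq l ->
  \sum_(p <- expand_at l v) t ^+ p.1 * phi p.2 =
  phi (fun j => if j \in l then A j + t *: B j else v j).
Proof.
move=> ml; elim: l v => [|i l IH] v /=; first by rewrite big_seq1 expr0 mul1r.
move=> /andP[il ul]; rewrite big_cat big_map /= IH //.
under eq_bigr do rewrite exprS -mulrA.
rewrite -big_distrr /= IH //.
set fill := fun j => if j \in l then A j + t *: B j else v j.
have fill_setc w : (fun j => if j \in l then A j + t *: B j else setc v i w j) =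
                   setc fill i w.
  apply: funext => j; rewrite /fill /setc.
  by case: eqP => [->|//]; rewrite (negbTE il).
have -> : (fun j => if j \in i :: l then A j + t *: B j else v j) =
          setc fill i (t *: B i + A i).
  apply: funext => j; rewrite /fill /setc in_cons.
  by case: (eqVneq j i) => [->|] /=; rewrite ?eqxx // addrC.
by rewrite !fill_setc ml addrC.
Qed.

Lemma expand_at_closed (P : set E) l v :
  (forall i, P (A i)) -> (forall i, P (B i)) -> (forall i, P (v i)) ->
  forall p, p \in expand_at l v -> forall i, P (p.2 i).
Proof.
move=> PA PB; elim: l v => [|i l IH] v Pv p /=; first by rewrite inE => /eqP ->.
have Psetc w : P w -> forall j, P (setc v i w j).
  by move=> Pw j; rewrite /setc; case: eqP.
rewrite mem_cat => /orP[/(IH _ (Psetc _ (PA i)))// | /mapP[q]].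
by move=> /(IH _ (Psetc _ (PB i))) Pq ->.
Qed.

Lemma expand_at_degree l v p : p \in expand_at l v -> (p.1 <= size l)%N.
Proof.
elim: l v p => [|i l IH] v p /=; first by rewrite inE => /eqP ->.
by rewrite mem_cat => /orP[/IH/leqW|/mapP[q /IH qle ->]].
Qed.

Lemma expand_at_prod (f : E -> R) l v : uniq l ->
  \sum_(p <- expand_at l v) \prod_(i < n) f (p.2 i) =
  \prod_(i < n) (if i \in l then f (A i) + f (B i) else f (v i)).
Proof.
elim: l v => [|i l IH] v /=.
  by move=> _; rewrite big_seq1.
move=> /andP[il ul]; rewrite big_cat big_map /= !IH //.
rewrite (bigD1 i) //= [X in _ + X](bigD1 i) //= [RHS](bigD1 i) //=.
rewrite /setc eqxx (negbTE il) in_cons eqxx /= mulrDl.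
by congr (_ * _ + _ * _); apply: eq_bigr => j /negbTE ji; rewrite ji in_cons ji.
Qed.

Definition expansion := expand_at (enum 'I_n) A.

Lemma multilinear_expansion (phi : ('I_n -> E) -> R) t : multilinear phi ->
  phi (fun i => A i + t *: B i) = \sum_(p <- expansion) t ^+ p.1 * phi p.2.
Proof.
move=> ml; rewrite expand_at_eval ?enum_uniq //.
by congr phi; apply: funext => i; rewrite mem_enum.
Qed.

Lemma expansion_closed (P : set E) :
  (forall i, P (A i)) -> (forall i, P (B i)) ->
  forall p, p \in expansion -> forall i, P (p.2 i).
Proof. by move=> PA PB; exact: expand_at_closed. Qed.

Lemma expansion_degree p : p \in expansion -> (p.1 <= n)%N.
Proof. by move/expand_at_degree; rewrite size_enum_ord. Qed.

Lemma expansion_prod (f : E -> R) :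
  \sum_(p <- expansion) \prod_(i < n) f (p.2 i) = \prod_(i < n) (f (A i) + f (B i)).
Proof.
by rewrite expand_at_prod ?enum_uniq //; apply: eq_bigr => i _; rewrite mem_enum.
Qed.

End MultilinearExpansion.

Definition polarization_weights (R : realType) n (w : 'I_n.+1 -> R) : Prop :=
  forall k, (k <= n)%N -> \sum_(m < n.+1) w m * m%:R ^+ k = (-1) ^+ k.

Lemma polarization (R : realType) (E : normedModType R) n (w : 'I_n.+1 -> R)
    (phi : ('I_n -> E) -> R) (y z : E) :
  polarization_weights w ->
  multilinear phi ->
  \sum_(m < n.+1) w m * phi (fun _ => y + m%:R *: z) = phi (fun _ => y - z).
Proof.
move=> hw ml; pose yz := expansion (fun _ : 'I_n => y) (fun _ => z).
have expand t : phi (fun _ => y + t *: z) = \sum_(p <- yz) t ^+ p.1 * phi p.2.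
  exact: (multilinear_expansion (fun _ => y) (fun _ => z)).
rewrite -scaleN1r expand; under eq_bigr do rewrite expand big_distrr /=.
rewrite exchange_big /=; apply: eq_big_seq => p p_yz.
under eq_bigr do rewrite mulrA.
by rewrite -big_distrl /= hw ?(expansion_degree p_yz).
Qed.

Definition polarization_constant (R : realType) n (w : 'I_n.+1 -> R) : R :=
  n.+1%:R ^+ n * \sum_(m < n.+1) `|w m|.

Lemma polarization_constant_gt0 (R : realType) n (w : 'I_n.+1 -> R) :
  polarization_weights w -> 0 < polarization_constant w.
Proof.
move=> hw; rewrite /polarization_constant mulr_gt0 ?exprn_gt0 //.
apply: lt_le_trans (ler_norm_sum _ _ _); rewrite normr_gt0.
have := hw 0%N isT; under eq_bigr do rewrite expr0 mulr1.
by move=> ->; exact: oner_neq0.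
Qed.

Section PositiveRefinement.
Variables (R : realType) (E : normedModType R) (Ep : set E) (n : nat).
Hypothesis Ep_cone : convex_cone Ep.
Local Notation normE := (fun v : E => `|v|).

Lemma positive_refinement (K : R) (pos neg : E -> E) (s : seq (R * ('I_n -> E))) :
  cone_splitting Ep (fun x => K * `|x|) pos neg ->
  exists s', [/\ tensor_eq s' s, (forall t, t \in s' -> forall i, Ep (t.2 i))
               & proj_cost normE s' <= K ^+ n * proj_cost normE s].
Proof.
move=> hsplit; pose rep (t : R * ('I_n -> E)) :=
  [seq (t.1 * (-1) ^+ p.1, p.2) | p <- expansion (pos \o t.2) (neg \o t.2)].
exists (flatten (map rep s)); split.
- rewrite -[X in tensor_eq _ X]map_id; apply: tensor_eq_flatten => t phi ml.
  rewrite /tensor_eval big_map.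
  under eq_bigr do rewrite -mulrA.
  rewrite -big_distrr -multilinear_expansion //=; congr (_ * phi _).
  by apply: funext => i; rewrite scaleN1r /=; have [_ _ <- _] := hsplit (t.2 i).
- move=> _ /flattenP[_ /mapP[t _ ->] /mapP[p p_exp ->]].
  by apply: expansion_closed p_exp => i; have [] := hsplit (t.2 i).
rewrite /proj_cost big_flatten big_map big_distrr /=; apply: ler_sum => t _.
rewrite big_map; under eq_bigr do rewrite normrM normrX normrN1 expr1n mulr1.
rewrite -big_distrr /= expansion_prod mulrCA; apply: ler_wpM2l => //.
have -> : K ^+ n = \prod_(i < n) K by rewrite prodr_const card_ord.
rewrite -big_split /=; apply: ler_prod => i _.
by have [_ _ _ le] := hsplit (t.2 i); rewrite addr_ge0.
Qed.

Lemma positive_sym_refinement (w : 'I_n.+1 -> R) (nrm : E -> R) (K : R)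
    (pos neg : E -> E) (s : seq (R * E)) :
  polarization_weights w ->
  cone_splitting Ep (fun x => K * nrm x) pos neg ->
  exists s', [/\ tensor_eq (diag_tensor n s') (diag_tensor n s),
                 (forall t, t \in s' -> Ep t.2)
               & sym_cost n normE s'
                   <= polarization_constant w * K ^+ n * sym_cost n nrm s].
Proof.
move=> hw hsplit; pose rep (t : R * E) :=
  [seq (t.1 * w m, pos t.2 + m%:R *: neg t.2) | m <- index_enum 'I_n.+1].
exists (flatten (map rep s)); split.
- rewrite /diag_tensor map_flatten -map_comp; apply: tensor_eq_flatten => t phi ml.
  rewrite /tensor_eval /= !big_map; under eq_bigr do rewrite -mulrA.
  by rewrite -big_distrr polarization //; have [_ _ <- _] := hsplit t.2.
- move=> _ /flattenP[_ /mapP[t _ ->] /mapP[m _ ->]] /=.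
  by have [Pp Pn _ _] := hsplit t.2; apply: coneD Pp (coneZ _ _ Pn).
rewrite /sym_cost big_flatten big_map big_distrr /=; apply: ler_sum => t _.
have [_ _ _ le] := hsplit t.2.
have bound (m : 'I_n.+1) :
    `|pos t.2 + m%:R *: neg t.2| <= n.+1%:R * (K * nrm t.2).
  apply: le_trans (ler_normD _ _) _; rewrite normrZ ger0_norm //.
  apply: le_trans (ler_wpM2l (ler0n _ _) le).
  rewrite mulrDr lerD //; first by rewrite ler_peMl // ler1n.
  by rewrite ler_wpM2r // ler_nat ltnW.
rewrite [X in _ <= X](_ : _ = \sum_(m < n.+1)
    `|t.1| * `|w m| * (n.+1%:R * (K * nrm t.2)) ^+ n); last first.
  by rewrite -big_distrl -big_distrr /= /polarization_constant !exprMn; ring.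
rewrite big_map; apply: ler_sum => m _; rewrite normrM; apply: ler_wpM2l.
  exact: mulr_ge0.
by rewrite lerXn2r ?nnegrE //; exact: le_trans (bound m).
Qed.

End PositiveRefinement.

Section NormComparisons.
Variables (R : realType) (E : normedModType R) (Ep : set E) (n : nat).
Hypotheses (Ep_ons : ordered_normed_space Ep) (n_gt0 : (0 < n)%N).
Local Notation c := (fine (cplus Ep)).
Local Notation normE := (fun v : E => `|v|).
Implicit Type x : seq (R * ('I_n -> E)).

Let Ep_cone : convex_cone Ep. Proof. by case: Ep_ons. Qed.
Let Ep_gen : generating Ep. Proof. by case: Ep_ons. Qed.
Let cplus_fin : (cplus Ep < +oo)%E. Proof. by case: Ep_ons. Qed.

Let cplus_eq0_tensor_eq_nil x : c = 0 -> tensor_eq [::] x.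
Proof.
by move/(cplus_eq0_trivial Ep_cone Ep_gen cplus_fin)/(tensor_eq_nil_trivial x n_gt0).
Qed.

Let cplus_gt0 : c != 0 -> 0 < c.
Proof. by move=> c_neq0; rewrite lt_def c_neq0 (cplus_ge0 Ep_gen cplus_fin). Qed.

Lemma proj_norm_positive_le x :
  (proj_norm normE Ep x <= (c ^+ n)%:E * proj_norm normE setT x)%E.
Proof.
have [c0|/cplus_gt0 c_gt0] := eqVneq c 0.
  rewrite c0 expr0n gtn_eqF // mul0e.
  apply: le_trans (proj_norm_le_cost _ (cplus_eq0_tensor_eq_nil x c0) _) _ => //.
  by rewrite /proj_cost big_nil.
apply: lee_ereal_inf_pZl (exprn_gt0 _ c_gt0) _ => s [sx _].
apply: lee_expr_addgt0 => e e0.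
have [pos [neg hsplit]] := exists_cone_splitting
  (fun v => splitting_le_cplus Ep_cone Ep_gen cplus_fin v e0).
have [s' [s's s'_pos le_cost]] := positive_refinement s hsplit.
apply: le_trans (proj_norm_le_cost _ (tensor_eq_trans s's sx) s'_pos) _.
by rewrite lee_fin.
Qed.

Lemma sym_proj_norm_positive_le (w : 'I_n.+1 -> R) x :
  polarization_weights w ->
  (sym_proj_norm normE Ep x
     <= (polarization_constant w)%:E * sym_proj_norm (plus_norm Ep) setT x)%E.
Proof.
move=> hw; apply: lee_ereal_inf_pZl (polarization_constant_gt0 hw) _ => s [sx _].
rewrite -[_ * _]mul1r -(expr1n _ n); apply: lee_expr_addgt0 => e e0.
have [pos [neg hsplit]] := exists_cone_splitting
  (fun v => splitting_le_plus_norm Ep_cone Ep_gen v e0).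
have [s' [s's s'_pos le_cost]] := positive_sym_refinement Ep_cone s hw hsplit.
apply: le_trans (sym_proj_norm_le_cost _ (tensor_eq_trans s's sx) s'_pos) _.
by rewrite lee_fin mulrA [_ * polarization_constant w]mulrC.
Qed.

Lemma sym_proj_norm_plus_norm_le x :
  (sym_proj_norm (plus_norm Ep) setT x <= (c ^+ n)%:E * sym_proj_norm normE setT x)%E.
Proof.
have [c0|/cplus_gt0 c_gt0] := eqVneq c 0.
  rewrite c0 expr0n gtn_eqF // mul0e.
  have nil_x : tensor_eq (diag_tensor n [::]) x := cplus_eq0_tensor_eq_nil x c0.
  apply: le_trans (sym_proj_norm_le_cost _ nil_x _) _ => //.
  by rewrite /sym_cost big_nil.
apply: lee_ereal_inf_pZl (exprn_gt0 _ c_gt0) _ => s [sx _].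
apply: le_trans (sym_proj_norm_le_cost _ sx (fun _ _ => I)) _.
rewrite lee_fin /sym_cost big_distrr /=; apply: ler_sum => t _.
rewrite mulrCA ler_wpM2l // -exprMn lerXn2r ?nnegrE ?(plus_norm_ge0 Ep_gen) //.
  by rewrite mulr_ge0 ?(cplus_ge0 Ep_gen cplus_fin).
exact: plus_norm_le_cplus_norm Ep_cone Ep_gen cplus_fin _.
Qed.

End NormComparisons.

Theorem lemma4p6 (R : realType) (n : nat) : (1 <= n)%N ->
  (forall (E : normedModType R) (Ep : set E), ordered_normed_space Ep ->
     forall x : seq (R * ('I_n -> E)),
       (proj_norm (fun v : E => `|v|%R) setT x <= proj_norm (fun v : E => `|v|%R) Ep x)%E /\
       (proj_norm (fun v : E => `|v|%R) Ep x
          <= ((fine (cplus Ep)) ^+ n)%:E * proj_norm (fun v : E => `|v|%R) setT x)%E)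
  /\
  (exists gamma : R,
    forall (E : normedModType R) (Ep : set E), ordered_normed_space Ep ->
     forall x : seq (R * ('I_n -> E)), symmetric_tensor x ->
       [/\ (sym_proj_norm (fun v : E => `|v|%R) setT x <= sym_proj_norm (fun v : E => `|v|%R) Ep x)%E,
           (sym_proj_norm (fun v : E => `|v|%R) Ep x
              <= gamma%:E * sym_proj_norm (plus_norm Ep) setT x)%E
         & (gamma%:E * sym_proj_norm (plus_norm Ep) setT x
              <= (gamma * (fine (cplus Ep)) ^+ n)%:E * sym_proj_norm (fun v : E => `|v|%R) setT x)%E]).
Proof.
move=> n_gt0; split=> [E Ep Ep_ons x|].
  by split; [exact: le_proj_norm | exact: proj_norm_positive_le].
have [w hw] := interpolation_weights n (fun k => (-1) ^+ k : R).
exists (polarization_constant w) => E Ep Ep_ons x _; split.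
- exact: le_sym_proj_norm.
- exact: sym_proj_norm_positive_le.
- rewrite (EFinM (polarization_constant w)) -muleA.
  apply: lee_wpmul2l; last exact: sym_proj_norm_plus_norm_le.
  by rewrite lee_fin mulr_ge0 ?sumr_ge0.
Qed.
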